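(* Let $S$ be a graded reduced affine monoid and $\tilde S$ as in the context. Suppose $\alpha,\beta\in\mathbb{N}_0^{\mathcal{A}(\tilde S)}$ satisfy $\kappa(\alpha)=\kappa(\beta)$ and $\delta(\alpha)=\delta(\beta)$. Then $x^{\alpha}\sim x^{\beta}$, where $\sim$ is the semigroup congruence on the free commutative monoid $\tilde M=\{x^{\alpha}\mid\alpha\in\mathbb{N}_0^{\mathcal{A}(\tilde S)}\}$ generated by $\{(x_{a[k]}x_{b[l]},\,x_{a[k+1]}x_{b[l-1]})\mid a,b\in\mathcal{A}(S),\ 0\le k\le|a|-1,\ 1\le l\le|b|\}$.
   Context: A monoid is a commutative cancellative semigroup with identity; affine means a finitely generated submonoid of a finitely generated free abelian group; reduced means the identity is the only unit. $S$ (written multiplicatively) is graded: $S=\bigsqcup_{d\in\mathbb{N}_0}S_d$ with $S_dS_e\subseteq S_{d+e}$, and $|s|=d$ for $s\in S_d$ (not necessarily connected). $\mathcal{A}(S)$ is the set of atoms of $S$. Define $\tilde S=\{s[i]\mid s\in S,\ 0\le i\le|s|\}$ with multiplication $s[i]\cdot t[j]=(st)[i+j]$ (a submonoid of $S\times\mathbb{N}_0$); its atoms are $\mathcal{A}(\tilde S)=\{a[i]\mid a\in\mathcal{A}(S),\ 0\le i\le|a|\}$. $\tilde M$ is the free commutative monoid on indeterminates $x_{a[i]}$, $a[i]\in\mathcal{A}(\tilde S)$, with $x^{\alpha}=\prod x_{a[i]}^{\alpha(a[i])}$. Define $\kappa:\mathbb{N}_0^{\mathcal{A}(\tilde S)}\to\mathbb{N}_0^{\mathcal{A}(S)}$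 by $\kappa(\lambda)(a)=\sum_{i=0}^{|a|}\lambda(a[i])$, and $\delta:\mathbb{N}_0^{\mathcal{A}(\tilde S)}\to\mathbb{N}_0$ by $\delta(\lambda)=\sum_{a[i]\in\mathcal{A}(\tilde S)}i\,\lambda(a[i])$. *)

From mathcomp Require Import all_boot all_order all_algebra.
From mathcomp Require Import finmap multiset.
Set Implicit Arguments. Unset Strict Implicit. Unset Printing Implicit Defensive.
Import GRing.Theory.
Local Open Scope ring_scope.

(* An affine monoid S, written additively, inside the free abelian group Z^n
   ('rV[int]_n), given by a finite generating set gens. *)
Definition inS (n : nat) (gens : seq 'rV[int]_n) (v : 'rV[int]_n) : Prop :=
  exists c : 'I_(size gens) -> nat, v = \sum_(i < size gens) (gens`_i *+ c i).

Definition reduced (n : nat) (gens : seq 'rV[int]_n) : Prop :=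
  forall s t, inS gens s -> inS gens t -> s + t = 0 -> s = 0.

(* graded: a degree function |.| : S -> N_0 with |s t| = |s| + |t|
   (i.e. S = disjoint union of the S_d with S_d S_e ⊆ S_{d+e}) *)
Definition grading (n : nat) (gens : seq 'rV[int]_n) (deg : 'rV[int]_n -> nat)
  : Prop :=
  forall s t, inS gens s -> inS gens t -> deg (s + t) = (deg s + deg t)%N.

Definition atom (n : nat) (gens : seq 'rV[int]_n) (a : 'rV[int]_n) : Prop :=
  [/\ inS gens a, a <> 0 &
      forall t u, inS gens t -> inS gens u -> a = t + u -> t = 0 \/ u = 0].

(* atoms of S~ : a[i] with a an atom and 0 <= i <= |a|, encoded as (a, i) *)
Definition atomt (n : nat) (gens : seq 'rV[int]_n) (deg : 'rV[int]_n -> nat)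
  (x : 'rV[int]_n * nat) : Prop :=
  atom gens x.1 /\ (x.2 <= deg x.1)%N.

(* elements of M~ = N_0^{A(S~)}: finitely supported multiplicity functions
   (multisets) supported in A(S~); x^alpha is identified with alpha and
   multiplication in M~ with multiset sum. *)
Definition inMt (n : nat) (gens : seq 'rV[int]_n) (deg : 'rV[int]_n -> nat)
  (al : (multiset ('rV[int]_n * nat)%type)) : Prop :=
  forall x, x \in finsupp al -> atomt gens deg x.

Definition kappa (n : nat) (deg : 'rV[int]_n -> nat)
  (al : (multiset ('rV[int]_n * nat)%type)) (a : 'rV[int]_n) : nat :=
  (\sum_(i < (deg a).+1) al (a, (i : nat)))%N.

Definition delta (n : nat) (al : (multiset ('rV[int]_n * nat)%type)) : nat :=
  (\sum_(x <- finsupp al) x.2 * al x)%N.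

Inductive cong (n : nat) (gens : seq 'rV[int]_n) (deg : 'rV[int]_n -> nat)
  : (multiset ('rV[int]_n * nat)%type) -> (multiset ('rV[int]_n * nat)%type) -> Prop :=
| cong_gen a b k l :
    atom gens a -> atom gens b -> (k < deg a)%N -> (1 <= l <= deg b)%N ->
    cong gens deg [mset (a, k); (b, l)]%mset [mset (a, k.+1); (b, l.-1)]%mset
| cong_refl al : inMt gens deg al -> cong gens deg al al
| cong_sym al be : cong gens deg al be -> cong gens deg be al
| cong_trans al be ga :
    cong gens deg al be -> cong gens deg be ga -> cong gens deg al ga
| cong_add al be ga : inMt gens deg ga ->
    cong gens deg al be -> cong gens deg (al `+` ga)%mset (be `+` ga)%mset.

(** Each generating move x_{a[k]} x_{b[l]} ~ x_{a[k+1]} x_{b[l-1]} preserves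
    κ, δ and the total degree, so the congruence does too.  Conversely, argue by
    induction on the degree of x^α.  Pick a variable a[i] of α; since
    κ(α)(a) = κ(β)(a) > 0, some a[j] occurs in β, say with i ≤ j.  While the
    level of a is below j ≤ δ(β) = δ(α), some other variable of α has positive
    level, and one move raises a by one level at its expense.  After j - i moves
    the two sides share the variable x_{a[j]}; cancelling it, the induction
    hypothesis applies to the cofactors. *)

From mathcomp Require Import all_boot all_order all_algebra.
From mathcomp Require Import finmap multiset.

Set Implicit Arguments.
Unset Strict Implicit.

Local Open Scope nat_scope.
Local Open Scope mset_scope.

Section MultisetSums.
Variable K : choiceType.
Implicit Types A B : {mset K}.

Lemma perm_msetD A B : perm_eq (A `+` B) (A ++ B).
Proof.
by apply/allP => x _; rewrite /= count_cat !count_mem_mset msetE2.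
Qed.

Lemma big_msetD (R : Type) (idx : R) (op : Monoid.com_law idx) (F : K -> R) A B :
  \big[op/idx]_(x <- A `+` B) F x =
  op (\big[op/idx]_(x <- A) F x) (\big[op/idx]_(x <- B) F x).
Proof. by rewrite (perm_big _ (perm_msetD A B)) big_cat. Qed.

Lemma mset_split1 x A : x \in A -> exists B, A = x +` B.
Proof. by move=> xA; exists (A `\ x); rewrite msetB1K. Qed.

Lemma size_msetD A B : size (A `+` B) = size A + size B.
Proof. by rewrite (perm_size (perm_msetD A B)) size_cat. Qed.

Lemma size_mset1D x A : size (x +` A) = (size A).+1.
Proof. by rewrite size_msetD enum_msetn. Qed.

End MultisetSums.

Section Congruence.
Variables (n : nat) (gens : seq 'rV[int]_n) (deg : 'rV[int]_n -> nat).
Local Notation M := (multiset ('rV[int]_n * nat)%type).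
Local Notation inMt := (inMt gens deg).
Local Notation atomt := (atomt gens deg).
Local Notation cong := (cong gens deg).
Local Notation kappa := (kappa deg).
Implicit Types (A B : M) (x : 'rV[int]_n * nat).

Lemma inMtP A : inMt A <-> {in A, forall x, atomt x}.
Proof. by split=> H x; [rewrite -msuppE; apply: H | rewrite msuppE; apply: H]. Qed.

Lemma inMt_msetD A B : inMt (A `+` B) <-> inMt A /\ inMt B.
Proof.
rewrite !inMtP; split=> [H | [HA HB] x].
  by split=> x xA; apply: H; rewrite in_msetD xA ?orbT.
by rewrite in_msetD => /orP[/HA | /HB].
Qed.

Lemma inMt_mset1 x : inMt [mset x] <-> atomt x.
Proof. by rewrite inMtP; split=> [/(_ x (mset11 x)) | ax y /mset1P ->]. Qed.

Lemma kappa_msetD A B c : kappa (A `+` B) c = kappa A c + kappa B c.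
Proof. by rewrite /kappa -big_split; apply: eq_bigr => i _; rewrite msetE2. Qed.

Lemma kappa_mset1 x c : kappa [mset x] c = (x.1 == c) && (x.2 <= deg c).
Proof.
case: x => a k; rewrite /kappa /=.
under eq_bigr do rewrite msetnE xpair_eqE [c == a]eq_sym.
rewrite -big_mkcond (big_ord1_cond_eq _ (fun=> 1) (fun=> a == c)).
by rewrite ltnS andbC; case: andP.
Qed.

Lemma kappa_gt0P A a :
  reflect (exists2 i, (a, i) \in A & i <= deg a) (0 < kappa A a).
Proof.
rewrite lt0n sum_nat_eq0 negb_forall; apply: (iffP existsP) => [[i] | [i Ai le_ia]].
  by rewrite /= mset_eq0 negbK => Ai; exists i; rewrite // -ltnS.
by exists (Ordinal (le_ia : i < (deg a).+1)); rewrite /= mset_eq0 negbK.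
Qed.

Lemma deltaE A : delta A = \sum_(x <- A) x.2.
Proof. by rewrite /delta sum_mset; apply: eq_bigr => x _; rewrite mulnC. Qed.

Lemma delta_msetD A B : delta (A `+` B) = delta A + delta B.
Proof. by rewrite !deltaE big_msetD. Qed.

Lemma delta_mset1 x : delta [mset x] = x.2.
Proof. by rewrite deltaE enum_msetn big_seq1. Qed.

Lemma leq_delta x A : x \in A -> x.2 <= delta A.
Proof. by case/mset_split1=> B ->; rewrite delta_msetD delta_mset1 leq_addr. Qed.

Lemma delta_gt0_mem A : 0 < delta A -> exists2 x, x \in A & 0 < x.2.
Proof.
rewrite deltaE => delta_gt0; apply/hasP; apply: contraTT delta_gt0 => /hasPn A0.
by rewrite -leqNgt leqn0 big1_seq // => x /A0; rewrite lt0n negbK => /eqP.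
Qed.

Lemma cong_inMt A B : cong A B -> inMt A /\ inMt B.
Proof.
elim=> [a b k l aa ab lt_ka /andP[l_gt0 le_lb] | C C_ok | C D _ [C_ok D_ok]
  | C D E _ [C_ok _] _ [_ E_ok] | C D E E_ok _ [C_ok D_ok]] //;
  last by rewrite !inMt_msetD.
have le_l1b : l.-1 <= deg b by apply: leq_trans (leq_pred l) le_lb.
by rewrite !inMt_msetD !inMt_mset1; do !split=> //; apply: ltnW.
Qed.

Lemma cong_kappa A B c : cong A B -> kappa A c = kappa B c.
Proof.
elim=> [a b k l _ _ lt_ka /andP[l_gt0 le_lb] | // | // | C D E _ -> _ -> //
  | C D E _ _ eqCD]; last by rewrite !kappa_msetD eqCD.
rewrite !kappa_msetD !kappa_mset1 /=; congr (_ + _).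
  by case: eqP => //= <-; rewrite lt_ka ltnW.
by case: eqP => //= <-; rewrite le_lb (leq_trans (leq_pred l)).
Qed.

Lemma cong_delta A B : cong A B -> delta A = delta B.
Proof.
elim=> [a b k l _ _ _ /andP[l_gt0 _] | // | // | C D E _ -> _ -> //
  | C D E _ _ eqCD]; last by rewrite !delta_msetD eqCD.
by rewrite !delta_msetD !delta_mset1 /= addSnnS prednK.
Qed.

Lemma cong_size A B : cong A B -> size A = size B.
Proof.
elim=> [a b k l | // | // | C D E _ -> _ -> // | C D E _ _ eqCD].
  by rewrite !size_msetD !enum_msetn.
by rewrite !size_msetD eqCD.
Qed.

Lemma cong_mset1D x A B : atomt x -> cong A B -> cong (x +` A) (x +` B).
Proof.
by move=> ax AB; rewrite ![x +` _]msetDC; apply: cong_add; rewrite ?inMt_mset1.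
Qed.

Lemma cong_raise1 A a j : inMt A -> (a, j) \in A -> j < deg a -> j < delta A ->
  exists2 A', cong A A' & (a, j.+1) \in A'.
Proof.
move=> A_ok /mset_split1[R defA] lt_ja; subst A.
rewrite delta_msetD delta_mset1 -{1}[j]addn0 ltn_add2l.
case/delta_gt0_mem=> -[b l] /mset_split1[R' defR] /= l_gt0; subst R.
move: A_ok; rewrite msetDA !inMt_msetD !inMt_mset1 => -[[[aa _] [ab le_lb]] R'_ok].
exists ([mset (a, j.+1); (b, l.-1)] `+` R'); last by rewrite !in_msetD in_mset1 eqxx.
by apply: cong_add => //; apply: cong_gen; rewrite ?l_gt0.
Qed.

Lemma cong_raise A a i d : inMt A -> (a, i) \in A ->
  i + d <= deg a -> i + d <= delta A -> exists2 A', cong A A' & (a, i + d) \in A'.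
Proof.
move=> A_ok; elim: d => [|d IH] ai le_deg le_delta.
  by exists A; rewrite ?addn0 //; apply: cong_refl.
rewrite addnS in le_deg le_delta *.
have [A1 AA1 ai1] := IH ai (ltnW le_deg) (ltnW le_delta).
have [_ A1_ok] := cong_inMt AA1.
have lt_delta1 : i + d < delta A1 by rewrite -(cong_delta AA1).
have [A2 A1A2 ai2] := cong_raise1 A1_ok ai1 le_deg lt_delta1.
by exists A2 => //; apply: cong_trans AA1 A1A2.
Qed.

Lemma cong_common_mem A B a i j : inMt A -> inMt B -> delta A = delta B ->
  (a, i) \in A -> (a, j) \in B ->
  exists A' B' x, [/\ cong A A', cong B B', x \in A' & x \in B'].
Proof.
move=> A_ok B_ok eq_delta ai aj.
wlog le_ij : A B i j A_ok B_ok eq_delta ai aj / i <= j.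
  move=> Hwlog; case: (leqP i j) => [le_ij | /ltnW le_ji].
    exact: Hwlog _ _ _ _ A_ok B_ok eq_delta ai aj le_ij.
  have [B' [A' [x [BB' AA' xB' xA']]]] :=
    Hwlog _ _ _ _ B_ok A_ok (esym eq_delta) aj ai le_ji.
  by exists A', B', x.
have [_ le_ja] := (inMtP B).1 B_ok _ aj.
have [A' AA' aj'] : exists2 A', cong A A' & (a, j) \in A'.
  rewrite -(subnKC le_ij); apply: cong_raise; rewrite ?subnKC //.
  by rewrite eq_delta (leq_delta aj).
by exists A', B, (a, j); split=> //; apply: cong_refl.
Qed.

Lemma cong_of_kappa_delta A B : inMt A -> inMt B ->
  (forall a, atom gens a -> kappa A a = kappa B a) -> delta A = delta B -> cong A B.
Proof.
move: {2}(size A) (erefl (size A)) => N.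
elim: N A B => [|N IH] A B size_A A_ok B_ok eq_kappa eq_delta.
  have A0 : A = mset0 by apply/eqP; rewrite -size_mset_eq0 size_A.
  have [B0 | [[a j] aj]] := mset_0Vmem B; first by rewrite A0 -B0; apply: cong_refl.
  have [aa le_ja] := (inMtP B).1 B_ok _ aj.
  have /kappa_gt0P[i] : 0 < kappa A a.
    by rewrite eq_kappa //; apply/kappa_gt0P; exists j.
  by rewrite A0 in_mset0.
have [A0 | [[a i] ai]] := mset_0Vmem A; first by rewrite A0 size_mset0 in size_A.
have [aa le_ia] := (inMtP A).1 A_ok _ ai.
have /kappa_gt0P[j aj _] : 0 < kappa B a.
  by rewrite -eq_kappa //; apply/kappa_gt0P; exists i.
have [A' [B' [x [AA' BB' /mset_split1[RA defA'] /mset_split1[RB defB']]]]] :=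
  cong_common_mem A_ok B_ok eq_delta ai aj.
subst A' B'.
have [_ /inMt_msetD[/inMt_mset1 ax RA_ok]] := cong_inMt AA'.
have [_ /inMt_msetD[_ RB_ok]] := cong_inMt BB'.
have RA_RB : cong RA RB.
  apply: IH => //.
  - by apply: succn_inj; rewrite -(size_mset1D x) -(cong_size AA').
  - move=> c /eq_kappa; rewrite (cong_kappa c AA') (cong_kappa c BB').
    by rewrite !kappa_msetD => /addnI.
  - move: eq_delta; rewrite (cong_delta AA') (cong_delta BB').
    by rewrite !delta_msetD => /addnI.
exact: cong_trans AA' (cong_trans (cong_mset1D ax RA_RB) (cong_sym BB')).
Qed.

End Congruence.

Theorem lemma4p2 (n : nat) (gens : seq 'rV[int]_n) (deg : 'rV[int]_n -> nat)
  (Hred : reduced gens) (Hgr : grading gens deg)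
  (al be : (multiset ('rV[int]_n * nat)%type))
  (Hal : inMt gens deg al) (Hbe : inMt gens deg be)
  (Hkappa : forall a, atom gens a -> kappa deg al a = kappa deg be a)
  (Hdelta : delta al = delta be) :
  cong gens deg al be.
Proof. exact: cong_of_kappa_delta. Qed.
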